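(* Suppose $H$ satisfies (B.1) and (B.2) and, for each fixed $s\in\mathbb{R}^n$, the functional $(t,x(\cdot))\mapsto H(t,x(\cdot),s)$ is non-anticipative. If a minimax solution $\varphi$ of the problem $\partial_t\varphi+H(t,x(\cdot),\nabla\varphi)=0$ on $[0,T)\times C([-h,T],\mathbb{R}^n)$, $\varphi(T,x(\cdot))=\sigma(x(\cdot))$, is $ci$-differentiable at some point $(t,x(\cdot))\in[0,T)\times C([-h,T],\mathbb{R}^n)$, then $\partial_t\varphi(t,x(\cdot))+H(t,x(\cdot),\nabla\varphi(t,x(\cdot)))=0$ at this point.
   Context: Fix $n\in\mathbb{N}$, $h>0$, $T>0$; $\langle\cdot,\cdot\rangle$, $\|\cdot\|$ Euclidean. $C([-h,T],\mathbb{R}^n)$ has the sup norm $\|\cdot\|_{[-h,T]}$, and $[0,T]\times C([-h,T],\mathbb{R}^n)$ the metric $|t-\tau|+\|x(\cdot)-y(\cdot)\|_{[-h,T]}$. Non-anticipative: $\varphi(t,x(\cdot))=\varphi(t,y(\cdot))$ whenever $t\in[0,T)$ and $x=y$ on $[-h,t]$. $\mathrm{Lip}(t,x(\cdot))$: functions $y(\cdot)\in C([-h,T],\mathbb{R}^n)$ with $y=x$ on $[-h,t]$, Lipschitz on $[t,T]$. $ci$-differentiable at $(t,x(\cdot))$, $t<T$: there exist $\partial_t\varphi(t,x(\cdot))\in\mathbb{R}$, $\nabla\varphi(t,x(\cdot))\in\mathbb{R}^n$ with $\varphi(\tau,y(\cdot))-\varphi(t,x(\cdot))=\partial_t\varphi(t,x(\cdot))(\tau-t)+\langle\nabla\varphi(t,x(\cdot)),y(\tau)-x(t)\rangle+o(\tau-t)$,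 $\tau\in(t,T]$, for every $y(\cdot)\in\mathrm{Lip}(t,x(\cdot))$, $o(\delta)/\delta\to0$ as $\delta\downarrow0$ ($o$ may depend on $y$). $H:[0,T]\times C([-h,T],\mathbb{R}^n)\times\mathbb{R}^n\to\mathbb{R}$, $\sigma:C([-h,T],\mathbb{R}^n)\to\mathbb{R}$. (B.1) $H$, $\sigma$ continuous. (B.2) there is $c>0$ with $|H(t,x(\cdot),s)-H(t,x(\cdot),r)|\le c(1+\max_{\tau\in[-h,t]}\|x(\tau)\|)\|s-r\|$ for all $t,x(\cdot),s,r$. $Y(t,x(\cdot))$: the $y(\cdot)\in\mathrm{Lip}(t,x(\cdot))$ with $\|\dot y(\tau)\|\le c(1+\max_{\xi\in[-h,\tau]}\|y(\xi)\|)$ for a.e. $\tau\in[t,T]$. Minimax solution: $\varphi$ non-anticipative, continuous, $\varphi(T,\cdot)=\sigma$, and (M): for every $(t,x(\cdot))\in[0,T)\times C([-h,T],\mathbb{R}^n)$ and $s\in\mathbb{R}^n$ there is $y(\cdot)\in Y(t,x(\cdot))$ with $\varphi(\tau,y(\cdot))-\varphi(t,x(\cdot))=\langle s,y(\tau)-x(t)\rangle-\int_t^\tau H(\xi,y(\cdot),s)\,d\xi$ for all $\tau\in[t,T]$. *)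

From HB Require Import structures.
From mathcomp Require Import all_boot all_order all_algebra.
From mathcomp Require Import all_classical all_reals all_analysis.
Set Implicit Arguments. Unset Strict Implicit. Unset Printing Implicit Defensive.
Import Order.TTheory GRing.Theory Num.Theory.
Import numFieldNormedType.Exports.
Local Open Scope classical_set_scope.
Local Open Scope ring_scope.

Section Defs.
Variables (R : realType) (n : nat) (h T : R).

Definition edot (u v : 'rV[R]_n) : R := \sum_(i < n) u ord0 i * v ord0 i.
Definition enorm (u : 'rV[R]_n) : R := Num.sqrt (edot u u).

(* C([-h,T],R^n): functions R -> R^n continuous on [-h,T], extended as
   constants outside [-h,T] (canonical representative). *)
Definition is_path (x : R -> 'rV[R]_n) : Prop :=
  {within `[-h, T], continuous x} /\
  (forall s, s < -h -> x s = x (-h)) /\ (forall s, T < s -> x s = x T).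

Definition pmax (x : R -> 'rV[R]_n) (b : R) : R :=
  sup [set enorm (x s) | s in `[-h, b]].
Definition supd (x y : R -> 'rV[R]_n) : R :=
  sup [set enorm (x s - y s) | s in `[-h, T]].

Definition cont_TC (phi : R -> (R -> 'rV[R]_n) -> R) : Prop :=
  forall t x, 0 <= t <= T -> is_path x ->
  forall e : R, 0 < e -> exists2 d : R, 0 < d &
    forall tau y, 0 <= tau <= T -> is_path y ->
      `|t - tau| + supd x y < d -> `|phi tau y - phi t x| < e.

Definition cont_C (sigma : (R -> 'rV[R]_n) -> R) : Prop :=
  forall x, is_path x ->
  forall e : R, 0 < e -> exists2 d : R, 0 < d &
    forall y, is_path y -> supd x y < d -> `|sigma y - sigma x| < e.

Definition cont_H (H : R -> (R -> 'rV[R]_n) -> 'rV[R]_n -> R) : Prop :=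
  forall t x s, 0 <= t <= T -> is_path x ->
  forall e : R, 0 < e -> exists2 d : R, 0 < d &
    forall tau y r, 0 <= tau <= T -> is_path y ->
      `|t - tau| + supd x y + enorm (s - r) < d ->
      `|H tau y r - H t x s| < e.

Definition condB2 (c : R) (H : R -> (R -> 'rV[R]_n) -> 'rV[R]_n -> R) : Prop :=
  forall t x s r, 0 <= t <= T -> is_path x ->
    `|H t x s - H t x r| <= c * (1 + pmax x t) * enorm (s - r).

Definition nonanticipative (phi : R -> (R -> 'rV[R]_n) -> R) : Prop :=
  forall t x y, 0 <= t < T -> is_path x -> is_path y ->
    (forall s, -h <= s <= t -> x s = y s) -> phi t x = phi t y.

Definition Lip (t : R) (x y : R -> 'rV[R]_n) : Prop :=
  is_path y /\ (forall s, -h <= s <= t -> y s = x s) /\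
  exists L : R, forall a b, t <= a <= T -> t <= b <= T ->
    enorm (y a - y b) <= L * `|a - b|.

Definition inY (c t : R) (x y : R -> 'rV[R]_n) : Prop :=
  Lip t x y /\
  exists N : set R, (@lebesgue_measure R).-negligible N /\
    forall tau, t <= tau <= T -> ~ N tau ->
      derivable y tau 1 /\ enorm ('D_1 y tau) <= c * (1 + pmax y tau).

Definition minimax (c : R) (H : R -> (R -> 'rV[R]_n) -> 'rV[R]_n -> R)
  (sigma : (R -> 'rV[R]_n) -> R) (phi : R -> (R -> 'rV[R]_n) -> R) : Prop :=
  nonanticipative phi /\ cont_TC phi /\
  (forall x, is_path x -> phi T x = sigma x) /\
  (forall t x s, 0 <= t < T -> is_path x ->
    exists y, inY c t x y /\
      forall tau, t <= tau <= T ->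
        phi tau y - phi t x =
        edot s (y tau - x t) -
        Rintegral (@lebesgue_measure R) `[t, tau] (fun xi => H xi y s)).

Definition ci_diff (phi : R -> (R -> 'rV[R]_n) -> R) (t : R)
  (x : R -> 'rV[R]_n) (a : R) (g : 'rV[R]_n) : Prop :=
  forall y, Lip t x y ->
  forall e : R, 0 < e -> exists2 d : R, 0 < d &
    forall tau, t < tau <= T -> tau - t < d ->
      `|phi tau y - phi t x - a * (tau - t) - edot g (y tau - x t)|
        <= e * (tau - t).

End Defs.

From HB Require Import structures.
From mathcomp Require Import all_boot all_order all_algebra.
From mathcomp Require Import all_classical all_reals all_analysis.
From mathcomp Require Import lra ring.
Import Order.TTheory GRing.Theory Num.Theory.
Import numFieldNormedType.Exports.
Local Open Scope classical_set_scope.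
Local Open Scope ring_scope.

(* Let phi be a minimax solution, ci-differentiable at (t, x)
   with derivatives a and g.  Apply the minimax property (M) with s := g: it
   yields a path y extending x on [-h, t] such that, for tau in [t, T],
     F(tau) := phi(tau, y) - phi(t, x) - <g, y(tau) - x(t)>
             = - \int_t^tau H(xi, y, g) dxi.
   Since y is in Lip(t, x), ci-differentiability says that F has right slope
   a at t.  Since xi |-> H(xi, y, g) is continuous, the integral has right
   slope H(t, y, g), so F also has right slope -H(t, y, g).  Right slopes are
   unique, hence a = -H(t, y, g), and H(t, y, g) = H(t, x, g) because H is
   non-anticipative and y = x on [-h, t]. *)

Section RightSlope.
Local Set Implicit Arguments.
Local Unset Strict Implicit.
Variable R : realType.

Definition right_slope (f : R -> R) (t T a : R) : Prop :=
  forall e : R, 0 < e -> exists2 d : R, 0 < d &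
    forall tau, t < tau <= T -> tau - t < d ->
      `|f tau - a * (tau - t)| <= e * (tau - t).

Lemma right_slope_unique (f : R -> R) (t T a b : R) : t < T ->
  right_slope f t T a -> right_slope f t T b -> a = b.
Proof.
move=> tT sa sb; apply/eqP; rewrite -subr_eq0 -normr_le0.
apply/ler_addgt0Pr => e e0; rewrite add0r.
have e20 : 0 < e / 2 by rewrite divr_gt0.
have [d1 d10 Hd1] := sa _ e20; have [d2 d20 Hd2] := sb _ e20.
pose dd := Num.min (Num.min d1 d2) (T - t).
have dd0 : 0 < dd by rewrite !lt_min d10 d20 subr_gt0 tT.
have dd1 : dd <= d1 by rewrite /dd !ge_min lexx.
have dd2 : dd <= d2 by rewrite /dd !ge_min lexx orbT.
have dd3 : dd <= T - t by rewrite /dd !ge_min lexx orbT.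
pose tau := t + dd / 2.
have tau_in : t < tau <= T by apply/andP; split; rewrite /tau; lra.
have ha := Hd1 tau tau_in; have hb := Hd2 tau tau_in.
have gap : 0 < tau - t by rewrite /tau; lra.
have bound : `|(a - b) * (tau - t)| <= e * (tau - t).
  have -> : (a - b) * (tau - t) =
      (f tau - b * (tau - t)) - (f tau - a * (tau - t)) by ring.
  apply: le_trans (ler_normB _ _) _.
  rewrite [e]splitr mulrDl; apply: lerD; [apply: hb | apply: ha];
    rewrite /tau; lra.
by move: bound; rewrite normrM (gtr0_norm gap) ler_pM2r.
Qed.

Lemma right_slope_opp (f : R -> R) (t T a : R) :
  right_slope f t T a -> right_slope (fun tau => - f tau) t T (- a).
Proof.
move=> sa e e0; have [d d0 Hd] := sa e e0; exists d => // tau ht hd.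
by rewrite mulNr -opprD normrN; exact: Hd.
Qed.

Lemma right_slope_ext (f g : R -> R) (t T a : R) :
  (forall tau, t <= tau <= T -> f tau = g tau) ->
  right_slope f t T a -> right_slope g t T a.
Proof.
move=> fg sa e e0; have [d d0 Hd] := sa e e0; exists d => // tau ht hd.
rewrite -fg; first exact: Hd.
by case/andP: ht => /ltW -> ->.
Qed.

Definition segment_continuous (f : R -> R) (t u : R) : Prop :=
  forall z, t <= z <= u -> forall e : R, 0 < e -> exists2 d : R, 0 < d &
    forall w, t <= w <= u -> `|z - w| < d -> `|f w - f z| < e.

Lemma segment_continuous_sub (f : R -> R) (t u v : R) : v <= u ->
  segment_continuous f t u -> segment_continuous f t v.
Proof.
move=> vu cf z /andP[tz zv] e e0.
have [d d0 Hd] : exists2 d : R, 0 < d &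
    forall w, t <= w <= u -> `|z - w| < d -> `|f w - f z| < e.
  by apply: cf => //; apply/andP; split; lra.
exists d => // w /andP[tw wv]; apply: Hd; apply/andP; split; lra.
Qed.

(* The projection of R onto the segment [t, u]; it is 1-Lipschitz, so it
   turns a function continuous on [t, u] into a continuous function on R. *)
Definition clamp (t u z : R) : R :=
  if z < t then t else if u < z then u else z.

Lemma clamp_in (t u z : R) : t <= u -> t <= clamp t u z <= u.
Proof.
move=> tu; rewrite /clamp.
by case: (ltP z t) => ?; case: (ltP u z) => ?; apply/andP; split; lra.
Qed.

Lemma clamp_id (t u z : R) : t <= z <= u -> clamp t u z = z.
Proof.
move=> /andP[tz zu]; rewrite /clamp.
case: (ltP z t) => ?; first lra.
by case: (ltP u z) => ? //; lra.
Qed.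

Lemma clamp_lip (t u z w : R) : t <= u ->
  `|clamp t u z - clamp t u w| <= `|z - w|.
Proof.
move=> tu; have h1 := ler_norm (z - w).
have h2 : w - z <= `|z - w| by rewrite distrC ler_norm.
rewrite /clamp ler_norml; case: (ltP z t) => ?; case: (ltP u z) => ?;
  case: (ltP w t) => ?; case: (ltP u w) => ?; apply/andP; split; lra.
Qed.

Lemma segment_continuous_clamp (f : R -> R) (t u : R) : t <= u ->
  segment_continuous f t u -> continuous (f \o clamp t u).
Proof.
move=> tu cf z; apply/cvgrPdist_lt => e e0.
have [d d0 Hd] := cf _ (clamp_in z tu) e e0.
apply/nbhs_ballP; exists d => // w /= zw; rewrite distrC.
apply: Hd; first exact: clamp_in.
by apply: le_lt_trans (clamp_lip z w tu) _; move: zw; rewrite /ball.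
Qed.

Lemma lebesgue_segment (t u : R) : t <= u ->
  fine ((@lebesgue_measure R) `[t, u]) = u - t.
Proof.
move=> tu; rewrite lebesgue_measure_itv /=.
case: ltP => //=; rewrite lee_fin => ut.
have -> : u = t by apply/eqP; rewrite eq_le tu ut.
by rewrite subrr.
Qed.

Lemma continuous_integrable (f : R -> R) (t u : R) :
  continuous f -> (@lebesgue_measure R).-integrable `[t, u] (EFin \o f).
Proof.
move=> cf; apply: continuous_compact_integrable; first exact: segment_compact.
exact: continuous_subspaceT.
Qed.

Lemma segment_integral_near (f : R -> R) (t u C e : R) : t <= u ->
  segment_continuous f t u ->
  (forall xi, t <= xi <= u -> `|f xi - C| <= e) ->
  `|Rintegral (@lebesgue_measure R) `[t, u] f - C * (u - t)| <= e * (u - t).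
Proof.
move=> tu cf near_C.
pose g := f \o clamp t u.
have cg : continuous g := segment_continuous_clamp tu cf.
have -> : Rintegral (@lebesgue_measure R) `[t, u] f =
    Rintegral (@lebesgue_measure R) `[t, u] g.
  by apply: eq_Rintegral => xi; rewrite inE /= in_itv /= => xi_in;
    rewrite /g /= clamp_id.
have cst (k : R) : continuous (fun _ : R => k) by move=> z; exact: cvg_cst.
have cC := cst C; have ce := cst e.
have cgC : continuous (fun z => g z - C).
  by move=> z; apply: cvgB; [exact: cg | exact: cC].
have cnorm : continuous (fun z => `|g z - C|).
  by move=> z; apply: continuous_comp (cgC z) _; exact: norm_continuous.
rewrite -(lebesgue_segment tu) -Rintegral_cst // -RintegralB //;
  try exact: continuous_integrable.
apply: le_trans; first apply: le_normr_Rintegral => //.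
  exact: continuous_integrable.
rewrite -Rintegral_cst //; apply: le_Rintegral => //;
  try exact: continuous_integrable.
by move=> xi; rewrite /= in_itv /= => xi_in; rewrite clamp_id // near_C.
Qed.

Lemma integral_right_slope (f : R -> R) (t T : R) : t <= T ->
  segment_continuous f t T ->
  right_slope (fun tau => Rintegral (@lebesgue_measure R) `[t, tau] f)
    t T (f t).
Proof.
move=> tT cf e e0.
have t_in : t <= t <= T by rewrite lexx tT.
have [d d0 Hd] := cf t t_in e e0.
exists d => // tau /andP[ttau tauT] hd.
apply: segment_integral_near; first exact: ltW.
  exact: segment_continuous_sub tauT cf.
move=> xi /andP[txi xitau]; apply: ltW; apply: Hd.
  by apply/andP; split; lra.
by rewrite distrC ger0_norm; lra.
Qed.

End RightSlope.

Section PathFunctionals.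
Local Set Implicit Arguments.
Local Unset Strict Implicit.
Variables (R : realType) (n : nat) (h T : R).

Lemma enorm0 : enorm (0 : 'rV[R]_n) = 0.
Proof. by rewrite /enorm /edot big1 ?sqrtr0 // => i _; rewrite mxE mul0r. Qed.

Lemma supd_self (y : R -> 'rV[R]_n) : -h <= T -> supd h T y y = 0.
Proof.
move=> hT; rewrite /supd.
have -> : [set enorm (y s - y s) | s in `[-h, T]] = [set (0 : R)].
  apply/seteqP; split => z /=.
    by move=> [s _ <-]; rewrite subrr enorm0.
  move=> ->; exists (-h); first by rewrite /= in_itv /= lexx hT.
  by rewrite subrr enorm0.
exact: sup1.
Qed.

(* Along a fixed path y and a fixed s, the Hamiltonian is continuous in
   time on [t, T]; this is (B.1) with the path and the slope frozen. *)
Lemma hamiltonian_time_continuous (H : R -> (R -> 'rV[R]_n) -> 'rV[R]_n -> R)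
    (y : R -> 'rV[R]_n) (s : 'rV[R]_n) (t : R) :
  -h <= T -> 0 <= t -> cont_H h T H -> is_path h T y ->
  segment_continuous (fun xi => H xi y s) t T.
Proof.
move=> hT t0 cH py z /andP[tz zT] e e0.
have z_in : 0 <= z <= T by apply/andP; split; lra.
have [d d0 Hd] := cH z y s z_in py e e0.
exists d => // w /andP[tw wT] zw; apply: Hd => //.
  by apply/andP; split; lra.
by rewrite supd_self // subrr enorm0 !addr0.
Qed.

Lemma ci_diff_right_slope (phi : R -> (R -> 'rV[R]_n) -> R) (t a : R)
    (x y : R -> 'rV[R]_n) (g : 'rV[R]_n) :
  ci_diff h T phi t x a g -> Lip h T t x y ->
  right_slope (fun tau => phi tau y - phi t x - edot g (y tau - x t)) t T a.
Proof.
move=> cid Ly e e0; have [d d0 Hd] := cid y Ly e e0.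
by exists d => // tau ht hd; rewrite addrAC; exact: Hd.
Qed.

End PathFunctionals.

Theorem proposition6 (R : realType) (n : nat) (h T c : R)
  (H : R -> (R -> 'rV[R]_n) -> 'rV[R]_n -> R)
  (sigma : (R -> 'rV[R]_n) -> R) (phi : R -> (R -> 'rV[R]_n) -> R)
  (t : R) (x : R -> 'rV[R]_n) (a : R) (g : 'rV[R]_n) :
  0 < h -> 0 < T -> 0 < c ->
  cont_H h T H -> cont_C h T sigma -> condB2 h T c H ->
  (forall s, nonanticipative h T (fun tau y => H tau y s)) ->
  minimax h T c H sigma phi ->
  0 <= t < T -> is_path h T x ->
  ci_diff h T phi t x a g ->
  a + H t x g = 0.
Proof.
move=> h0 T0 _ cH _ _ H_na [_ [_ [_ char_M]]] t_in px cid.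
have /andP[t0 tT] := t_in.
have hT : -h <= T by lra.
have [y [[Ly _] char_eq]] := char_M t x g t_in px.
have [py [y_eq_x _]] := Ly.
have Hty : H t y g = H t x g.
  by apply: (H_na g t y x t_in py px) => s hs; rewrite y_eq_x.
pose F tau := phi tau y - phi t x - edot g (y tau - x t).
have slope_a : right_slope F t T a := ci_diff_right_slope cid Ly.
have slope_H : right_slope F t T (- H t y g).
  apply: right_slope_ext (right_slope_opp (integral_right_slope (ltW tT)
    (hamiltonian_time_continuous g hT t0 cH py))).
  by move=> tau tau_in; rewrite /F char_eq // addrAC subrr add0r.
by rewrite (right_slope_unique tT slope_a slope_H) Hty addNr.
Qed.
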